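(* Let $\langle T,\le\rangle$ be a temporal flow. Then for every formula $\varphi$ and every finite set of formulas $\Gamma$, $\Gamma\vdash_{\mathrm{NM}}\varphi$ if and only if $\Gamma\models_T\varphi$.
   Context: A temporal flow is a totally ordered infinite set $\langle T,\le\rangle$. Formulas are built from a denumerable set of propositional variables and $\bot$ using $\neg$ and $\to$ (in NM, $\neg\varphi$ is $\varphi\to\bot$, and the other NM connectives $\&,\land,\vee$ are definable from $\neg,\to$). NM (Nilpotent Minimum logic) is the logic MTL (axioms: $(\varphi\to\psi)\to((\psi\to\chi)\to(\varphi\to\chi))$; $(\varphi\&\psi)\to\varphi$; $(\varphi\&\psi)\to(\psi\&\varphi)$; $(\varphi\land\psi)\to\varphi$; $(\varphi\land\psi)\to(\psi\land\varphi)$; $(\varphi\&(\varphi\to\psi))\to(\psi\land\varphi)$; $(\varphi\to(\psi\to\chi))\to((\varphi\&\psi)\to\chi)$; $((\varphi\&\psi)\to\chi)\to(\varphi\to(\psi\to\chi))$; $((\varphi\to\psi)\to\chi)\to(((\psi\to\varphi)\to\chi)\to\chi)$; $\bot\to\varphi$; rule modus ponens) extended by $\neg\neg\varphi\to\varphi$ and $\neg(\varphi\&\psi)\vee((\varphi\land\psi)\to(\varphi\&\psi))$, where $\varphi\vee\psi$ is $((\varphi\to\psi)\to\psi)\land((\psi\to\varphi)\to\varphi)$. Let $T'=T\cup\{-\infty\}$ and $T''=(T'\times\{0,1\})\cup\{\langle-\infty,\frac12\rangle\}$, totally ordered by: for $t<t'$ in $T$, $\langle-\infty,0\rangle<\langle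 t,0\rangle<\langle t',0\rangle<\langle-\infty,\frac12\rangle<\langle t',1\rangle<\langle t,1\rangle<\langle-\infty,1\rangle$. A function $f:T\to\{0,\frac12,1\}$ is admissible if it is constant, or there exist $i\in\{0,1\}$ and $t\in T$ (not the minimum of $T$, if $T$ has one) with $f(t')=i$ for $t'\ge t$ and $f(t'')=\frac12$ for $t''<t$; set $d(f)=\langle-\infty,c\rangle$ if $f$ is constant with value $c$, and $d(f)=\langle t,i\rangle$ in the second case. A temporal assignment is $v:VAR\times T\to\{0,\frac12,1\}$ with every $v(x,\cdot)$ admissible. The map $s^v$ from formulas to $T''$ is: $s^v(x)=d(v(x,\cdot))$; $s^v(\bot)=\langle-\infty,0\rangle$; if $s^v(\varphi)=\langle a,m\rangle$ then $s^v(\neg\varphi)=\langle a,1-m\rangle$; $s^v(\varphi\to\psi)=\langle-\infty,1\rangle$ if $s^v(\varphi)\le s^v(\psi)$, else the maximum of $s^v(\neg\varphi)$ and $s^v(\psi)$ in $T''$. $\Gamma\models_T\varphi$ means: for every temporal assignment $v$ on $T$ with $s^v(\psi)=\langle-\infty,1\rangle$ for all $\psi\in\Gamma$, also $s^v(\varphi)=\langle-\infty,1\rangle$. *)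

From Stdlib Require Import List Classical ClassicalEpsilon.
Import ListNotations.

Inductive formula : Type :=
| Var : nat -> formula
| Bot : formula
| Imp : formula -> formula -> formula.

Definition Neg (a : formula) : formula := Imp a Bot.
Definition SConj (a b : formula) : formula := Neg (Imp a (Neg b)).
(** weak conjunction (lattice meet), definable in NM from ~ and -> *)
Definition WConj (a b : formula) : formula :=
  let A := Imp (Imp a b) (Neg a) in
  let B := Imp (Imp b a) (Neg b) in
  Imp (Imp A B) (Neg A).
Definition Disj (a b : formula) : formula :=
  WConj (Imp (Imp a b) b) (Imp (Imp b a) a).

Inductive NM_axiom : formula -> Prop :=
| ax1 p q r : NM_axiom (Imp (Imp p q) (Imp (Imp q r) (Imp p r)))
| ax2 p q : NM_axiom (Imp (SConj p q) p)
| ax3 p q : NM_axiom (Imp (SConj p q) (SConj q p))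
| ax4 p q : NM_axiom (Imp (WConj p q) p)
| ax5 p q : NM_axiom (Imp (WConj p q) (WConj q p))
| ax6 p q : NM_axiom (Imp (SConj p (Imp p q)) (WConj q p))
| ax7 p q r : NM_axiom (Imp (Imp p (Imp q r)) (Imp (SConj p q) r))
| ax8 p q r : NM_axiom (Imp (Imp (SConj p q) r) (Imp p (Imp q r)))
| ax9 p q r : NM_axiom (Imp (Imp (Imp p q) r) (Imp (Imp (Imp q p) r) r))
| ax10 p : NM_axiom (Imp Bot p)
| axInv p : NM_axiom (Imp (Neg (Neg p)) p)
| axNM p q : NM_axiom (Disj (Neg (SConj p q)) (Imp (WConj p q) (SConj p q))).

Inductive NM_derives (Gamma : list formula) : formula -> Prop :=
| d_ax phi : NM_axiom phi -> NM_derives Gamma phi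
| d_hyp phi : In phi Gamma -> NM_derives Gamma phi
| d_mp phi psi : NM_derives Gamma phi -> NM_derives Gamma (Imp phi psi) ->
                 NM_derives Gamma psi.

Definition temporal_flow {T : Type} (le : T -> T -> Prop) : Prop :=
  (forall x, le x x) /\
  (forall x y, le x y -> le y x -> x = y) /\
  (forall x y z, le x y -> le y z -> le x z) /\
  (forall x y, le x y \/ le y x) /\
  ~ (exists l : list T, forall t, In t l).

Inductive V3 : Type := V0 | Vhalf | V1.

(** T'' = (T' x {0,1}) U {<-oo,1/2>}, with T' = T U {-oo}; [None] is -oo,
    the boolean is the second component (false = 0, true = 1). *)
Inductive T2 (T : Type) : Type :=
| Pt : option T -> bool -> T2 T
| MinfHalf : T2 T.
Arguments Pt {T}.
Arguments MinfHalf {T}.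

Section Sem.
Context {T : Type} (le : T -> T -> Prop).

Definition lt (x y : T) : Prop := le x y /\ x <> y.

Definition leT' (a b : option T) : Prop :=
  match a, b with
  | None, _ => True
  | Some _, None => False
  | Some x, Some y => le x y
  end.

Definition leT2 (p q : T2 T) : Prop :=
  match p, q with
  | Pt a false, Pt b false => leT' a b
  | Pt _ false, _ => True
  | MinfHalf, Pt _ false => False
  | MinfHalf, _ => True
  | Pt a true, Pt b true => leT' b a
  | Pt _ true, _ => False
  end.

Definition negT2 (p : T2 T) : T2 T :=
  match p with
  | Pt a m => Pt a (negb m)
  | MinfHalf => MinfHalf
  end.

Definition maxT2 (p q : T2 T) : T2 T :=
  if excluded_middle_informative (leT2 p q) then q else p.

Definition topT2 : T2 T := Pt None true.
Definition botT2 : T2 T := Pt None false.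

Definition is_min (t : T) : Prop := forall u, le t u.

Definition admissible (f : T -> V3) : Prop :=
  (exists c, forall t, f t = c) \/
  (exists i t, (i = V0 \/ i = V1) /\ ~ is_min t /\
     (forall t', le t t' -> f t' = i) /\
     (forall t'', lt t'' t -> f t'' = Vhalf)).

Definition const_T2 (c : V3) : T2 T :=
  match c with V0 => Pt None false | Vhalf => MinfHalf | V1 => Pt None true end.

Definition step_prop (f : T -> V3) (p : V3 * T) : Prop :=
  (fst p = V0 \/ fst p = V1) /\ ~ is_min (snd p) /\
  (forall t', le (snd p) t' -> f t' = fst p) /\
  (forall t'', lt t'' (snd p) -> f t'' = Vhalf).

Definition d (f : T -> V3) : T2 T :=
  match excluded_middle_informative (exists c, forall t, f t = c) with
  | left H => const_T2 (proj1_sig (constructive_indefinite_description _ H))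
  | right _ =>
      match excluded_middle_informative (exists p, step_prop f p) with
      | left H =>
          let p := proj1_sig (constructive_indefinite_description _ H) in
          Pt (Some (snd p)) (match fst p with V1 => true | _ => false end)
      | right _ => MinfHalf (* unreachable for admissible f *)
      end
  end.

Definition temporal_assignment (v : nat -> T -> V3) : Prop :=
  forall x, admissible (v x).

(** s^v ; the clause for negation s^v(~phi) = <a,1-m> follows from the
    implication clause since ~phi is phi -> bot. *)
Fixpoint sv (v : nat -> T -> V3) (phi : formula) : T2 T :=
  match phi with
  | Var x => d (v x)
  | Bot => botT2
  | Imp a b =>
      let sa := sv v a in
      let sb := sv v b in
      if excluded_middle_informative (leT2 sa sb) then topT2
      else maxT2 (negT2 sa) sb
  end.

Definition models (Gamma : list formula) (phi : formula) : Prop :=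
  forall v, temporal_assignment v ->
    (forall psi, In psi Gamma -> sv v psi = topT2) -> sv v phi = topT2.

End Sem.

From Stdlib Require Import List Classical ClassicalEpsilon ZArith Lia Sorting.Sorted.
Import ListNotations.

(* Soundness: a finite set of values in T'' closed under negation is mapped, by
   counting the values below each element, order-preservingly into a chain
   {-M, ..., M} of integers with [z -> w = M] if [z <= w] and [max (-z) w]
   otherwise; there the NM axioms are identities of linear arithmetic.
   Completeness: if Gamma does not derive phi, prelinearity (axiom 9) lets us add
   finitely many implications to Gamma, keeping phi underivable, until all pairs of
   formulas relevant to the subformulas of Gamma and phi are comparable.  Ranking
   these subformulas in the resulting Lindenbaum preorder evaluates them in a chain
   {-M, ..., M}, which embeds into T'' by values of admissible functions because T
   is infinite; this yields a temporal assignment satisfying Gamma but not phi. *)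

Definition Top : formula := Imp Bot Bot.

Section Derivations.
Variable Gamma : list formula.

Definition dle (a b : formula) : Prop := NM_derives Gamma (Imp a b).
Definition dcomparable (a b : formula) : Prop := dle a b \/ dle b a.

Lemma dle_ax (a b : formula) : NM_axiom (Imp a b) -> dle a b.
Proof. apply d_ax. Qed.

Lemma dle_mp (a b : formula) : NM_derives Gamma a -> dle a b -> NM_derives Gamma b.
Proof. apply d_mp. Qed.

Lemma dle_trans (a b c : formula) : dle a b -> dle b c -> dle a c.
Proof. intros Hab Hbc. exact (d_mp _ _ _ Hbc (d_mp _ _ _ Hab (d_ax _ _ (ax1 a b c)))). Qed.

Lemma dle_uncurry (p q r : formula) : dle p (Imp q r) -> dle (SConj p q) r.
Proof. intros H. exact (d_mp _ _ _ H (d_ax _ _ (ax7 p q r))). Qed.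

Lemma dle_curry (p q r : formula) : dle (SConj p q) r -> dle p (Imp q r).
Proof. intros H. exact (d_mp _ _ _ H (d_ax _ _ (ax8 p q r))). Qed.

Lemma dle_sconj_l (p q : formula) : dle (SConj p q) p.
Proof. apply dle_ax, ax2. Qed.

Lemma dle_sconjC (p q : formula) : dle (SConj p q) (SConj q p).
Proof. apply dle_ax, ax3. Qed.

Lemma dle_sconj_r (p q : formula) : dle (SConj p q) q.
Proof. exact (dle_trans _ _ _ (dle_sconjC p q) (dle_sconj_l q p)). Qed.

Lemma dle_bot (a : formula) : dle Bot a.
Proof. apply dle_ax, ax10. Qed.

Lemma derives_top : NM_derives Gamma Top.
Proof. apply dle_bot. Qed.

Lemma derives_of_dle_top (a : formula) : dle Top a -> NM_derives Gamma a.
Proof. apply dle_mp, derives_top. Qed.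

Lemma dle_refl (a : formula) : dle a a.
Proof. apply derives_of_dle_top, dle_curry, dle_sconj_r. Qed.

Lemma dle_top (a : formula) : dle a Top.
Proof. apply dle_curry, dle_sconj_r. Qed.

Lemma dle_weaken (a b : formula) : dle b (Imp a b).
Proof. apply dle_curry, dle_sconj_l. Qed.

Lemma dle_top_of_derives (a : formula) : NM_derives Gamma a -> dle Top a.
Proof. intros H. exact (dle_mp _ _ H (dle_weaken Top a)). Qed.

Lemma dle_modus_ponens (a b : formula) : dle (SConj a (Imp a b)) b.
Proof. eapply dle_trans; [apply dle_sconjC | apply dle_uncurry, dle_refl]. Qed.

Lemma dle_imp_of_derives (a b : formula) : NM_derives Gamma a -> dle (Imp a b) b.
Proof. intros H. exact (dle_mp _ _ H (dle_curry _ _ _ (dle_modus_ponens a b))). Qed.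

Lemma dle_sconj_mono_r (x y z : formula) : dle x y -> dle (SConj z x) (SConj z y).
Proof.
  intros H. eapply dle_trans; [apply dle_sconjC|]. apply dle_uncurry.
  eapply dle_trans; [exact H | apply dle_curry, dle_sconjC].
Qed.

Lemma dle_sconj_mono_l (x y z : formula) : dle x y -> dle (SConj x z) (SConj y z).
Proof.
  intros H. eapply dle_trans; [apply dle_sconjC|].
  eapply dle_trans; [apply dle_sconj_mono_r, H | apply dle_sconjC].
Qed.

Lemma dle_sconj_derives (x z : formula) : NM_derives Gamma x -> dle z (SConj z x).
Proof.
  intros H. eapply dle_trans; [apply dle_curry, dle_refl | apply dle_imp_of_derives, H].
Qed.

Lemma dle_sconjA (a b c : formula) : dle (SConj a (SConj b c)) (SConj (SConj a b) c).
Proof.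
  apply dle_uncurry. eapply dle_trans; [apply dle_curry, dle_curry, dle_refl | apply dle_ax, ax7].
Qed.

Lemma dle_dneg_intro (a : formula) : dle a (Neg (Neg a)).
Proof. apply dle_curry, dle_modus_ponens. Qed.

Lemma dle_dneg_elim (a : formula) : dle (Neg (Neg a)) a.
Proof. apply dle_ax, axInv. Qed.

Lemma dle_contra (a b : formula) : dle a b -> dle (Neg b) (Neg a).
Proof. intros H. exact (d_mp _ _ _ H (d_ax _ _ (ax1 a b Bot))). Qed.

Lemma dle_neg_imp (a b : formula) : dle (Neg a) (Imp a b).
Proof.
  apply dle_curry. eapply dle_trans; [apply dle_sconjC|].
  eapply dle_trans; [apply dle_modus_ponens | apply dle_bot].
Qed.

Lemma derives_disj_comparable (u v : formula) :
  NM_derives Gamma (Disj u v) -> dcomparable u v -> NM_derives Gamma u \/ NM_derives Gamma v.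
Proof.
  intros H [Huv|Hvu].
  - right. apply (dle_mp (Imp u v)); [exact Huv|]. apply (dle_mp _ _ H), dle_ax, ax4.
  - left. apply (dle_mp (Imp v u)); [exact Hvu|].
    apply (dle_mp _ _ H). eapply dle_trans; [apply dle_ax, ax5 | apply dle_ax, ax4].
Qed.

(* In an NM chain, [a -> b] for [b < a] is either [b] or [~a]; the NM axiom
   [~(a & z) \/ (a /\ z -> a & z)] with [z := a -> b] decides which. *)
Lemma dle_imp_cases (a b : formula) :
  let z := Imp a b in
  dcomparable a z ->
  dcomparable (Neg (SConj a z)) (Imp (WConj a z) (SConj a z)) ->
  ~ dle a b -> dle z b \/ dle z (Neg a).
Proof.
  intros z Haz Huv Nab.
  assert (Hmp : dle (SConj a z) b) by apply dle_modus_ponens.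
  destruct (derives_disj_comparable _ _ (d_ax _ _ (axNM a z)) Huv) as [Hu|Hv].
  - right. apply dle_curry. eapply dle_trans; [apply dle_sconjC | exact Hu].
  - assert (Hwc : forall x y, dle x y -> dle x (WConj y x)).
    { intros x y Hxy. eapply dle_trans;
        [apply (dle_sconj_derives (Imp x y)), Hxy | apply dle_ax, ax6]. }
    destruct Haz as [H|H].
    + exfalso. apply Nab. eapply dle_trans; [apply Hwc, H|].
      eapply dle_trans; [apply dle_ax, ax5|]. exact (dle_trans _ _ _ Hv Hmp).
    + left. eapply dle_trans; [apply Hwc, H|]. exact (dle_trans _ _ _ Hv Hmp).
Qed.

End Derivations.

Fixpoint spow (x : formula) (n : nat) : formula :=
  match n with 0 => Top | S n => SConj x (spow x n) end.

Lemma dle_spow_add (Gamma : list formula) (h : formula) (m n : nat) :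
  dle Gamma (spow h (m + n)) (SConj (spow h m) (spow h n)).
Proof.
  induction m as [|m IH]; cbn [spow Nat.add].
  - eapply dle_trans; [apply (dle_sconj_derives _ Top), derives_top | apply dle_sconjC].
  - eapply dle_trans; [apply dle_sconj_mono_r, IH | apply dle_sconjA].
Qed.

Lemma deduction_spow (Gamma : list formula) (h a : formula) :
  NM_derives (Gamma ++ [h]) a -> exists n, dle Gamma (spow h n) a.
Proof.
  intros H; induction H as [a Ha|a Ha|a b _ [n IH1] _ [m IH2]].
  - exists 0. apply dle_top_of_derives, d_ax, Ha.
  - apply in_app_or in Ha as [Ha|[<-|[]]].
    + exists 0. apply dle_top_of_derives, d_hyp, Ha.
    + exists 1. apply dle_sconj_l.
  - exists (m + n). eapply dle_trans; [apply dle_spow_add|].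
    eapply dle_trans; [apply dle_sconj_mono_l, IH2|].
    eapply dle_trans; [apply dle_sconj_mono_r, IH1|].
    eapply dle_trans; [apply dle_sconjC | apply dle_modus_ponens].
Qed.

(* Prelinearity (axiom 9): [(p -> q) -> r] and [(q -> p) -> r] give [r]; the
   powers are consumed one factor at a time by currying it into [r]. *)
Lemma derives_of_prelinear_spow (Gamma : list formula) (p q : formula) :
  forall n m r, dle Gamma (spow (Imp p q) n) r -> dle Gamma (spow (Imp q p) m) r ->
  NM_derives Gamma r.
Proof.
  induction n as [|n IHn]; intros m r H1 H2; [now apply derives_of_dle_top|].
  revert r H1 H2; induction m as [|m IHm]; intros r H1 H2; [now apply derives_of_dle_top|].
  apply (dle_mp _ (Imp (Imp q p) r)).
  - apply IHm; apply dle_curry.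
    + eapply dle_trans; [apply dle_sconj_l | exact H1].
    + eapply dle_trans; [apply dle_sconjC | exact H2].
  - apply (dle_mp _ (Imp (Imp p q) r)); [|apply d_ax, ax9].
    apply (IHn (S m)); apply dle_curry.
    + eapply dle_trans; [apply dle_sconjC | exact H1].
    + eapply dle_trans; [apply dle_sconj_l | exact H2].
Qed.

Lemma derives_prelinear_cases (Gamma : list formula) (p q a : formula) :
  NM_derives (Gamma ++ [Imp p q]) a -> NM_derives (Gamma ++ [Imp q p]) a ->
  NM_derives Gamma a.
Proof.
  intros H1 H2.
  destruct (deduction_spow _ _ _ H1) as [n Hn], (deduction_spow _ _ _ H2) as [m Hm].
  exact (derives_of_prelinear_spow _ _ _ _ _ _ Hn Hm).
Qed.

Lemma comparable_extension (L : list (formula * formula)) :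
  forall Gamma a, ~ NM_derives Gamma a ->
  exists C, ~ NM_derives (Gamma ++ C) a /\
    forall p q, In (p, q) L -> dcomparable (Gamma ++ C) p q.
Proof.
  induction L as [|[p q] L IH]; intros Gamma a Ha.
  - exists []. rewrite app_nil_r. split; [exact Ha | intros ? ? []].
  - assert (exists x, (x = Imp p q \/ x = Imp q p) /\ ~ NM_derives (Gamma ++ [x]) a)
      as [x [Hx Hxa]].
    { destruct (classic (NM_derives (Gamma ++ [Imp p q]) a)) as [H1|H1]; [|eauto].
      destruct (classic (NM_derives (Gamma ++ [Imp q p]) a)) as [H2|H2]; [|eauto].
      exfalso. exact (Ha (derives_prelinear_cases _ _ _ _ H1 H2)). }
    destruct (IH _ _ Hxa) as [C [HC HL]]. rewrite <- app_assoc in HC, HL.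
    exists (x :: C). split; [exact HC|].
    intros p' q' [E|Hin]; [|exact (HL _ _ Hin)].
    injection E as <- <-.
    assert (Hx' : NM_derives (Gamma ++ x :: C) x) by (apply d_hyp, in_or_app; simpl; auto).
    destruct Hx as [->| ->]; [left|right]; exact Hx'.
Qed.

Open Scope Z_scope.

(* The NM chain [-M, M] of integers, with negation [z |-> -z]. *)
Definition impZ (M z w : Z) : Z := if z <=? w then M else Z.max (- z) w.

Ltac destruct_innermost_leb :=
  repeat match goal with
  | |- context [?a <=? ?b] =>
      lazymatch a with context [_ <=? _] => fail | _ =>
      lazymatch b with context [_ <=? _] => fail | _ =>
        destruct (Z.leb_spec a b); cbv beta iota end end
  end.

Section ChainZ.
Variable M : Z.
Hypothesis M_ge0 : 0 <= M.
Variable val : nat -> Z.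
Hypothesis val_range : forall n, -M <= val n <= M.

Fixpoint evalZ (f : formula) : Z :=
  match f with
  | Var n => val n
  | Bot => - M
  | Imp a b => impZ M (evalZ a) (evalZ b)
  end.

Lemma evalZ_range (f : formula) : -M <= evalZ f <= M.
Proof. induction f; cbn [evalZ]; unfold impZ; destruct_innermost_leb; auto; lia. Qed.

Ltac chain_arith :=
  repeat match goal with
  | |- context [evalZ ?x] =>
      let H := fresh in pose proof (evalZ_range x) as H; revert H; generalize (evalZ x); intros ? ?
  end;
  unfold impZ; destruct_innermost_leb; lia.

Lemma evalZ_neg (a : formula) : evalZ (Neg a) = - evalZ a.
Proof. unfold Neg; cbn [evalZ]. chain_arith. Qed.

Lemma evalZ_sconj (a b : formula) :
  evalZ (SConj a b) = if evalZ a + evalZ b <=? 0 then - M else Z.min (evalZ a) (evalZ b).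
Proof. unfold SConj. rewrite evalZ_neg. cbn [evalZ]. rewrite evalZ_neg. chain_arith. Qed.

Lemma evalZ_wconj (a b : formula) : evalZ (WConj a b) = Z.min (evalZ a) (evalZ b).
Proof. unfold WConj, Neg. cbn [evalZ]. chain_arith. Qed.

Lemma evalZ_disj (a b : formula) : evalZ (Disj a b) = Z.max (evalZ a) (evalZ b).
Proof. unfold Disj. rewrite evalZ_wconj. cbn [evalZ]. chain_arith. Qed.

Lemma evalZ_axiom (f : formula) : NM_axiom f -> evalZ f = M.
Proof.
  intros []; repeat first
    [ rewrite evalZ_sconj | rewrite evalZ_wconj | rewrite evalZ_disj | rewrite evalZ_neg
    | progress cbn [evalZ] ];
  chain_arith.
Qed.

End ChainZ.

Lemma filter_length_mono {A : Type} (f g : A -> bool) (l : list A) :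
  (forall y, f y = true -> g y = true) -> (length (filter f l) <= length (filter g l))%nat.
Proof.
  intros H; induction l as [|y l IH]; cbn [filter]; [lia|].
  destruct (f y) eqn:E; [rewrite (H _ E); cbn [length]; lia|].
  destruct (g y); cbn [length]; lia.
Qed.

Lemma filter_length_strict {A : Type} (f g : A -> bool) (l : list A) (x : A) :
  (forall y, f y = true -> g y = true) -> In x l -> g x = true -> f x = false ->
  (length (filter f l) < length (filter g l))%nat.
Proof.
  intros H Hx Hg Hf; induction l as [|y l IH]; [destruct Hx|].
  cbn [filter]. pose proof (filter_length_mono f g l H).
  destruct Hx as [<-|Hx].
  - rewrite Hf, Hg; cbn [length]; lia.
  - specialize (IH Hx). destruct (f y) eqn:E; [rewrite (H _ E)|destruct (g y)]; cbn [length]; lia.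
Qed.

Lemma StronglySorted_nth_lt {A : Type} (R : A -> A -> Prop) (l : list A) (d : A) (i j : nat) :
  StronglySorted R l -> (i < j < length l)%nat -> R (nth i l d) (nth j l d).
Proof.
  intros Hs; revert i j; induction Hs as [|x l _ IH Hx]; intros i j Hij; cbn in *; [lia|].
  destruct i, j; try lia.
  - rewrite Forall_forall in Hx. apply Hx, nth_In. lia.
  - apply IH. lia.
Qed.

Section Rank.
Variables (A : Type) (R : A -> A -> Prop) (neg : A -> A) (top : A) (B : list A).
Hypothesis R_refl : forall x, R x x.
Hypothesis R_trans : forall x y z, R x y -> R y z -> R x z.
Hypothesis neg_antitone : forall x y, R x y -> R (neg y) (neg x).
Hypothesis neg_neg_l : forall x, R x (neg (neg x)).
Hypothesis neg_neg_r : forall x, R (neg (neg x)) x.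
Hypothesis R_top : forall x, R x top.

Definition relb (y x : A) : bool := if excluded_middle_informative (R y x) then true else false.

Lemma relbP (y x : A) : relb y x = true <-> R y x.
Proof. unfold relb; destruct excluded_middle_informative; split; auto; discriminate. Qed.

Definition below (x : A) : Z := Z.of_nat (length (filter (fun y => relb y x) B)).
(* Subtracting the count below [neg x] makes [rank (neg x) = - rank x]. *)
Definition rank (x : A) : Z := below x - below (neg x).

Lemma below_mono (x y : A) : R x y -> below x <= below y.
Proof.
  intros H. apply Nat2Z.inj_le, filter_length_mono.
  intros z Hz%relbP. apply relbP. eauto.
Qed.

Lemma rank_mono (x y : A) : R x y -> rank x <= rank y.
Proof.
  intros H. unfold rank.
  pose proof (below_mono _ _ H). pose proof (below_mono _ _ (neg_antitone _ _ H)). lia.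
Qed.

Lemma rank_strict (x y : A) : In x B -> R y x -> ~ R x y -> rank y < rank x.
Proof.
  intros Hx Hyx Hxy. unfold rank. pose proof (below_mono _ _ (neg_antitone _ _ Hyx)).
  enough (below y < below x) by lia.
  apply Nat2Z.inj_lt, (filter_length_strict _ _ _ x).
  - intros z Hz%relbP. apply relbP. eauto.
  - exact Hx.
  - apply relbP, R_refl.
  - destruct (relb x y) eqn:E; [apply relbP in E; contradiction | reflexivity].
Qed.

Lemma rank_neg (x : A) : rank (neg x) = - rank x.
Proof.
  unfold rank.
  pose proof (below_mono _ _ (neg_neg_l x)). pose proof (below_mono _ _ (neg_neg_r x)). lia.
Qed.

Lemma rank_range (x : A) : - rank top <= rank x <= rank top.
Proof.
  pose proof (rank_mono _ _ (R_top x)). pose proof (rank_mono _ _ (R_top (neg x))).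
  rewrite rank_neg in *. lia.
Qed.

End Rank.

Fixpoint subformulas (f : formula) : list formula :=
  f :: match f with Imp a b => subformulas a ++ subformulas b | _ => [] end.

Lemma subformulas_self (f : formula) : In f (subformulas f).
Proof. destruct f; now left. Qed.

Lemma incl_subformulas_imp (a b : formula) :
  incl (subformulas a) (subformulas (Imp a b)) /\ incl (subformulas b) (subformulas (Imp a b)).
Proof. split; intros x Hx; right; apply in_or_app; auto. Qed.

(* The comparabilities that [dle_imp_cases] needs for the implication [a -> b]. *)
Definition imp_pairs (f : formula) : list (formula * formula) :=
  match f with
  | Imp a b => [(a, b); (a, f); (Neg (SConj a f), Imp (WConj a f) (SConj a f))]
  | _ => []
  end.

Section LindenbaumRank.
Variables (Gamma B : list formula).

Definition lrank : formula -> Z := rank formula (dle Gamma) Neg B.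

Lemma lrank_mono (a b : formula) : dle Gamma a b -> lrank a <= lrank b.
Proof. apply rank_mono; [apply dle_trans | apply dle_contra]. Qed.

Lemma lrank_strict (a b : formula) :
  In a B -> dle Gamma b a -> ~ dle Gamma a b -> lrank b < lrank a.
Proof. apply rank_strict; [apply dle_refl | apply dle_trans | apply dle_contra]. Qed.

Lemma lrank_neg (a : formula) : lrank (Neg a) = - lrank a.
Proof.
  exact (rank_neg _ _ _ _ (dle_trans Gamma) (dle_dneg_intro Gamma) (dle_dneg_elim Gamma) a).
Qed.

Lemma lrank_range (a : formula) : - lrank Top <= lrank a <= lrank Top.
Proof.
  exact (rank_range _ _ _ _ _ (dle_trans Gamma) (dle_contra Gamma)
    (dle_dneg_intro Gamma) (dle_dneg_elim Gamma) (dle_top Gamma) a).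
Qed.

Lemma lrank_derives (a : formula) : NM_derives Gamma a -> lrank a = lrank Top.
Proof.
  intros H. pose proof (lrank_mono _ _ (dle_top_of_derives _ _ H)).
  pose proof (lrank_range a). lia.
Qed.

Lemma derives_of_lrank_top (a : formula) : In Top B -> lrank a = lrank Top -> NM_derives Gamma a.
Proof.
  intros HTop Ha. destruct (classic (dle Gamma Top a)) as [H|H]; [now apply derives_of_dle_top|].
  pose proof (lrank_strict _ _ HTop (dle_top _ a) H). lia.
Qed.

Lemma lrank_bot : lrank Bot = - lrank Top.
Proof.
  rewrite <- lrank_neg. apply Z.le_antisymm; apply lrank_mono;
    [apply dle_bot | apply dle_imp_of_derives, derives_top].
Qed.

Lemma lrank_imp (a b : formula) : In a B ->
  (forall p q, In (p, q) (imp_pairs (Imp a b)) -> dcomparable Gamma p q) ->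
  lrank (Imp a b) = impZ (lrank Top) (lrank a) (lrank b).
Proof.
  intros Ha Hpairs. unfold impZ.
  pose proof (Hpairs _ _ (or_introl eq_refl)) as Pab.
  pose proof (Hpairs _ _ (or_intror (or_introl eq_refl))) as Paz.
  pose proof (Hpairs _ _ (or_intror (or_intror (or_introl eq_refl)))) as Puv.
  destruct (classic (dle Gamma a b)) as [Hab|Hab].
  - rewrite (proj2 (Z.leb_le _ _) (lrank_mono _ _ Hab)). now apply lrank_derives.
  - assert (Hba : dle Gamma b a) by (destruct Pab; tauto).
    pose proof (lrank_strict _ _ Ha Hba Hab) as Hlt.
    rewrite (proj2 (Z.leb_gt _ _) Hlt).
    pose proof (lrank_mono _ _ (dle_neg_imp Gamma a b)).
    pose proof (lrank_mono _ _ (dle_weaken Gamma a b)).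
    rewrite lrank_neg in *.
    destruct (dle_imp_cases Gamma a b Paz Puv Hab) as [Hz|Hz];
      apply lrank_mono in Hz; rewrite ?lrank_neg in Hz; lia.
Qed.

Lemma lrank_evalZ (f : formula) :
  (forall p q, In (p, q) (flat_map imp_pairs B) -> dcomparable Gamma p q) ->
  incl (subformulas f) B ->
  lrank f = evalZ (lrank Top) (fun n => lrank (Var n)) f.
Proof.
  intros Hpairs Hsub. induction f as [n| |a IHa b IHb]; cbn [evalZ]; [reflexivity|apply lrank_bot|].
  destruct (incl_subformulas_imp a b) as [Ha Hb].
  rewrite <- IHa, <- IHb by (eapply incl_tran; eauto).
  apply lrank_imp; [apply Hsub, Ha, subformulas_self|].
  intros p q Hpq. apply Hpairs, in_flat_map.
  exists (Imp a b). split; [apply Hsub, subformulas_self | exact Hpq].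
Qed.

End LindenbaumRank.

Section Flow.
Variables (T : Type) (le : T -> T -> Prop).
Hypothesis Hflow : temporal_flow le.

Lemma flow_refl (x : T) : le x x. Proof. apply Hflow. Qed.
Lemma flow_antisym (x y : T) : le x y -> le y x -> x = y. Proof. apply Hflow. Qed.
Lemma flow_trans (x y z : T) : le x y -> le y z -> le x z. Proof. apply Hflow. Qed.
Lemma flow_total (x y : T) : le x y \/ le y x. Proof. apply Hflow. Qed.

Lemma flow_fresh (l : list T) : exists t, ~ In t l.
Proof. apply not_all_ex_not. intros H. apply (proj2 (proj2 (proj2 (proj2 Hflow)))). eauto. Qed.

Ltac T2_cases x := destruct x as [[?|] [|]|].

Lemma leT2_refl (x : T2 T) : leT2 le x x.
Proof. T2_cases x; cbn; auto using flow_refl. Qed.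

Lemma leT2_trans (x y z : T2 T) : leT2 le x y -> leT2 le y z -> leT2 le x z.
Proof. T2_cases x; T2_cases y; T2_cases z; cbn; eauto using flow_trans; tauto. Qed.

Lemma leT2_total (x y : T2 T) : leT2 le x y \/ leT2 le y x.
Proof. T2_cases x; T2_cases y; cbn; auto using flow_total. Qed.

Lemma leT2_antisym (x y : T2 T) : leT2 le x y -> leT2 le y x -> x = y.
Proof.
  T2_cases x; T2_cases y; cbn; try tauto; intros; try reflexivity;
  do 2 f_equal; auto using flow_antisym.
Qed.

Lemma leT2_top (x : T2 T) : leT2 le x topT2.
Proof. T2_cases x; cbn; auto. Qed.

Lemma negT2_antitone (x y : T2 T) : leT2 le x y -> leT2 le (negT2 y) (negT2 x).
Proof. T2_cases x; T2_cases y; cbn; auto. Qed.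

Lemma negT2_involutive (x : T2 T) : negT2 (negT2 x) = x.
Proof. T2_cases x; reflexivity. Qed.

Definition impT2 (x y : T2 T) : T2 T :=
  if excluded_middle_informative (leT2 le x y) then topT2 else maxT2 le (negT2 x) y.

Lemma sv_Imp (v : nat -> T -> V3) (a b : formula) :
  sv le v (Imp a b) = impT2 (sv le v a) (sv le v b).
Proof. reflexivity. Qed.

Lemma impT2_top_l (y : T2 T) : impT2 topT2 y = topT2 -> y = topT2.
Proof.
  unfold impT2, maxT2. destruct excluded_middle_informative as [H|_].
  - intros _. apply leT2_antisym; [apply leT2_top | exact H].
  - destruct excluded_middle_informative; [auto | discriminate].
Qed.

Section RankT2.
Variable W : list (T2 T).
Hypothesis W_neg : forall x, In x W -> In (negT2 x) W.

Definition trank : T2 T -> Z := rank (T2 T) (leT2 le) negT2 W.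

Lemma trank_mono (x y : T2 T) : leT2 le x y -> trank x <= trank y.
Proof. exact (rank_mono _ _ _ _ leT2_trans negT2_antitone x y). Qed.

Lemma trank_le_iff (x y : T2 T) : In x W -> leT2 le x y <-> trank x <= trank y.
Proof.
  intros Hx. split; [apply trank_mono|]. intros Hle.
  destruct (classic (leT2 le x y)) as [H|H]; [exact H|].
  assert (Hyx : leT2 le y x) by (destruct (leT2_total x y); tauto).
  pose proof (rank_strict _ _ _ _ leT2_refl leT2_trans negT2_antitone _ _ Hx Hyx H).
  unfold trank in Hle. lia.
Qed.

Lemma trank_neg (x : T2 T) : trank (negT2 x) = - trank x.
Proof.
  apply rank_neg; [apply leT2_trans | |]; intros; rewrite negT2_involutive; apply leT2_refl.
Qed.

Lemma trank_range (x : T2 T) : - trank topT2 <= trank x <= trank topT2.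
Proof.
  apply (rank_range _ _ _ _ _ leT2_trans negT2_antitone); try apply leT2_top;
  intros; rewrite negT2_involutive; apply leT2_refl.
Qed.

Lemma trank_imp (x y : T2 T) : In x W -> trank (impT2 x y) = impZ (trank topT2) (trank x) (trank y).
Proof.
  intros Hx. unfold impT2, impZ, maxT2.
  destruct excluded_middle_informative as [H|H].
  - now rewrite (proj2 (Z.leb_le _ _) (trank_mono _ _ H)).
  - rewrite trank_le_iff in H by exact Hx. rewrite (proj2 (Z.leb_gt _ _)) by lia.
    destruct excluded_middle_informative as [H'|H'];
      rewrite trank_le_iff, trank_neg in H' by auto; rewrite ?trank_neg; lia.
Qed.

End RankT2.

Definition value_set (v : nat -> T -> V3) (f : formula) : list (T2 T) :=
  let l := topT2 :: map (sv le v) (subformulas f) in l ++ map negT2 l.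

Lemma value_set_neg (v : nat -> T -> V3) (f : formula) (x : T2 T) :
  In x (value_set v f) -> In (negT2 x) (value_set v f).
Proof.
  unfold value_set. intros [Hx|Hx]%in_app_or; apply in_or_app; [right; now apply in_map|left].
  apply in_map_iff in Hx as [y [<- Hy]]. now rewrite negT2_involutive.
Qed.

Lemma trank_evalZ (v : nat -> T -> V3) (f g : formula) : incl (subformulas g) (subformulas f) ->
  trank (value_set v f) (sv le v g)
  = evalZ (trank (value_set v f) topT2) (fun n => trank (value_set v f) (sv le v (Var n))) g.
Proof.
  intros Hsub. induction g as [n| |a IHa b IHb]; cbn [evalZ]; [reflexivity| |].
  - exact (trank_neg _ topT2).
  - destruct (incl_subformulas_imp a b) as [Ha Hb].
    rewrite sv_Imp, (trank_imp _ (value_set_neg v f)), IHa, IHb;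
      try (eapply incl_tran; eassumption).
    + reflexivity.
    + apply in_or_app; left; right. apply in_map, Hsub, Ha, subformulas_self.
Qed.

Lemma sv_axiom (v : nat -> T -> V3) (f : formula) : NM_axiom f -> sv le v f = topT2.
Proof.
  intros Hax. apply leT2_antisym; [apply leT2_top|].
  apply (trank_le_iff (value_set v f)); [apply in_or_app; left; left; reflexivity|].
  rewrite (trank_evalZ v f f (incl_refl _)), evalZ_axiom; [lia| | |exact Hax].
  - pose proof (trank_range (value_set v f) topT2); lia.
  - intros n. apply trank_range.
Qed.

Lemma soundness (Gamma : list formula) (phi : formula) :
  NM_derives Gamma phi -> models le Gamma phi.
Proof.
  intros H v _ HGamma. induction H as [f Hf|f Hf|a b _ IHa _ IHab].
  - now apply sv_axiom.
  - now apply HGamma.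
  - rewrite sv_Imp, IHa in IHab. now apply impT2_top_l.
Qed.

Lemma flow_lt_trans (x y z : T) : lt le x y -> lt le y z -> lt le x z.
Proof.
  intros [Hxy Nxy] [Hyz Nyz]. split; [eauto using flow_trans|].
  intros ->. apply Nxy, flow_antisym; assumption.
Qed.

Fixpoint insert (t : T) (l : list T) : list T :=
  match l with
  | [] => [t]
  | x :: l' => if excluded_middle_informative (le t x) then t :: l else x :: insert t l'
  end.

Lemma in_insert (t y : T) (l : list T) : In y (insert t l) -> y = t \/ In y l.
Proof.
  induction l as [|x l IH]; cbn; [intuition|].
  destruct excluded_middle_informative; cbn; intros [H|H]; auto.
  destruct (IH H); auto.
Qed.

Lemma length_insert (t : T) (l : list T) : length (insert t l) = S (length l).
Proof. induction l; cbn; [|destruct excluded_middle_informative; cbn]; auto. Qed.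

Lemma sorted_insert (t : T) (l : list T) :
  StronglySorted (lt le) l -> ~ In t l -> StronglySorted (lt le) (insert t l).
Proof.
  induction l as [|x l IH]; intros Hs Ht; cbn; [repeat constructor|].
  inversion Hs as [|? ? Hs' Hx]; subst.
  assert (Htx : t <> x) by (intros ->; apply Ht; now left).
  destruct excluded_middle_informative as [H|H].
  - constructor; [exact Hs|]. constructor; [now split|].
    eapply Forall_impl; [|exact Hx]. intros y. now apply flow_lt_trans.
  - assert (Hxt : lt le x t) by (split; [destruct (flow_total t x); tauto | auto]).
    constructor; [apply IH; auto; intros Hin; apply Ht; now right|].
    apply Forall_forall. intros y [->|Hy]%in_insert; [exact Hxt|].
    rewrite Forall_forall in Hx. auto.
Qed.

Lemma sorted_list_exists (n : nat) : exists l, StronglySorted (lt le) l /\ length l = n.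
Proof.
  induction n as [|n [l [Hs Hl]]]; [exists []; split; [constructor | reflexivity]|].
  destruct (flow_fresh l) as [t Ht].
  exists (insert t l). rewrite length_insert. split; [now apply sorted_insert | now f_equal].
Qed.

Lemma strict_chain (K : nat) :
  exists g : nat -> T, forall i j, (i < j <= K)%nat -> lt le (g i) (g j).
Proof.
  destruct (sorted_list_exists (S K)) as [l [Hs Hl]], (flow_fresh []) as [t0 _].
  exists (fun i => nth i l t0). intros i j Hij. apply StronglySorted_nth_lt; [exact Hs | lia].
Qed.

Definition realizable (p : T2 T) : Prop :=
  match p with Pt (Some t) _ => ~ is_min le t | _ => True end.

Definition realize (p : T2 T) : T -> V3 :=
  match p with
  | Pt None b => fun _ => if b then V1 else V0
  | MinfHalf => fun _ => Vhalf
  | Pt (Some t) b =>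
      fun u => if excluded_middle_informative (le t u) then (if b then V1 else V0) else Vhalf
  end.

Lemma d_const (f : T -> V3) (c : V3) : (forall t, f t = c) -> d le f = const_T2 c.
Proof.
  intros Hc. unfold d. destruct excluded_middle_informative as [H|H]; [|exfalso; eauto].
  destruct constructive_indefinite_description as [c' Hc']. cbn.
  destruct (flow_fresh []) as [t _]. now rewrite <- (Hc t), <- (Hc' t).
Qed.

Lemma step_prop_unique (f : T -> V3) (p q : V3 * T) :
  step_prop le f p -> step_prop le f q -> p = q.
Proof.
  destruct p as [i t], q as [i' t']; unfold step_prop; cbn.
  intros (Hi & _ & Hge & Hlt) (Hi' & _ & Hge' & Hlt').
  assert (t = t') as <-.
  { apply NNPP. intros Htt. destruct (flow_total t t') as [H|H].
    - specialize (Hge t (flow_refl t)). rewrite (Hlt' t (conj H Htt)) in Hge.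
      destruct Hi; congruence.
    - specialize (Hge' t' (flow_refl t')). rewrite (Hlt t' (conj H (not_eq_sym Htt))) in Hge'.
      destruct Hi'; congruence. }
  now rewrite <- (Hge t (flow_refl t)), <- (Hge' t (flow_refl t)).
Qed.

(* A step function is not constant: below its (non-minimal) jump point it is 1/2. *)
Lemma d_step (f : T -> V3) (i : V3) (t : T) :
  step_prop le f (i, t) -> d le f = Pt (Some t) (match i with V1 => true | _ => false end).
Proof.
  intros Hstep. unfold d. destruct excluded_middle_informative as [[c Hc]|_].
  - exfalso. destruct Hstep as (Hi & Hmin & Hge & Hlt); cbn in *.
    apply Hmin. intros u. apply NNPP. intros Hu.
    assert (Hut : lt le u t)
      by (split; [destruct (flow_total t u); tauto | intros ->; apply Hu, flow_refl]).
    pose proof (Hlt u Hut) as Hfu. pose proof (Hge t (flow_refl t)) as Hft.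
    rewrite Hc in Hfu, Hft. destruct Hi; congruence.
  - destruct excluded_middle_informative as [H|H]; [|exfalso; eauto].
    destruct constructive_indefinite_description as [p Hp]. cbn.
    now rewrite (step_prop_unique f p (i, t) Hp Hstep).
Qed.

Lemma realize_spec (p : T2 T) : realizable p -> admissible le (realize p) /\ d le (realize p) = p.
Proof.
  destruct p as [[t|] b|]; cbn [realizable]; intros Hp.
  - set (i := if b then V1 else V0).
    assert (Hstep : step_prop le (realize (Pt (Some t) b)) (i, t)).
    { split; [destruct b; auto|]. split; [exact Hp|]. cbn. split.
      - intros u Hu. now destruct excluded_middle_informative.
      - intros u [Hut Hneq]. destruct excluded_middle_informative as [Htu|]; [|reflexivity].
        contradict Hneq. now apply flow_antisym. }
    split; [right; exists i, t; exact Hstep|].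
    rewrite (d_step _ _ _ Hstep). now destruct b.
  - split; [left; exists (if b then V1 else V0); reflexivity|].
    rewrite (d_const _ (if b then V1 else V0)); [now destruct b | reflexivity].
  - split; [left; exists Vhalf; reflexivity|]. now rewrite (d_const _ Vhalf).
Qed.

Section Embedding.
Variables (g : nat -> T) (M : Z).
Hypothesis M_pos : 0 < M.
Hypothesis g_chain : forall i j, (i < j <= Z.to_nat M)%nat -> lt le (g i) (g j).

Lemma g_le_iff (i j : Z) : 0 <= i <= M -> 0 <= j <= M ->
  le (g (Z.to_nat i)) (g (Z.to_nat j)) <-> i <= j.
Proof.
  intros Hi Hj. split; intros H.
  - destruct (Z_le_gt_dec i j) as [|Hgt]; [assumption|].
    destruct (g_chain (Z.to_nat j) (Z.to_nat i)) as [Hle Hneq]; [lia|].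
    contradict Hneq. now apply flow_antisym.
  - destruct (Z.eq_dec i j) as [->|]; [apply flow_refl|]. apply g_chain. lia.
Qed.

(* The chain [-M, M] is laid out in T'' as
   [-M < -M+1 < ... < -1 < 0 < 1 < ... < M]
   [<-oo,0> < <g 1,0> < ... < <g (M-1),0> < <-oo,1/2> < <g (M-1),1> < ... < <g 1,1> < <-oo,1>]. *)
Definition phiZ (z : Z) : T2 T :=
  if z =? M then topT2
  else if z =? - M then botT2
  else if z =? 0 then MinfHalf
  else Pt (Some (g (Z.to_nat (M - Z.abs z)))) (0 <? z).

Ltac phiZ_cases z :=
  unfold phiZ; destruct (Z.eqb_spec z M); [|destruct (Z.eqb_spec z (- M))];
  [| |destruct (Z.eqb_spec z 0)]; [| | |destruct (Z.ltb_spec 0 z)].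

Lemma phiZ_M : phiZ M = topT2.
Proof. unfold phiZ. now rewrite Z.eqb_refl. Qed.

Lemma phiZ_le_iff (z w : Z) : -M <= z <= M -> -M <= w <= M ->
  leT2 le (phiZ z) (phiZ w) <-> z <= w.
Proof.
  intros Hz Hw. phiZ_cases z; phiZ_cases w; cbn; try (split; intros; lia || tauto);
  rewrite g_le_iff by lia; lia.
Qed.

Lemma phiZ_neg (z : Z) : -M <= z <= M -> negT2 (phiZ z) = phiZ (- z).
Proof.
  intros Hz. phiZ_cases z; phiZ_cases (- z); try lia; try reflexivity;
  cbn; do 2 f_equal; try (f_equal; f_equal; lia); apply Z.ltb_lt || apply Z.ltb_ge; lia.
Qed.

Lemma phiZ_imp (z w : Z) : -M <= z <= M -> -M <= w <= M ->
  impT2 (phiZ z) (phiZ w) = phiZ (impZ M z w).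
Proof.
  intros Hz Hw. unfold impT2, impZ, maxT2.
  destruct excluded_middle_informative as [H|H]; rewrite phiZ_le_iff in H by assumption.
  - rewrite (proj2 (Z.leb_le _ _) H). symmetry. apply phiZ_M.
  - rewrite (proj2 (Z.leb_gt _ _)) by lia. rewrite phiZ_neg by assumption.
    destruct excluded_middle_informative as [H'|H']; rewrite phiZ_le_iff in H' by lia;
      f_equal; lia.
Qed.

Lemma phiZ_top (z : Z) : -M <= z <= M -> phiZ z = topT2 -> z = M.
Proof. intros Hz. phiZ_cases z; easy. Qed.

Lemma phiZ_bot : phiZ (- M) = botT2.
Proof. phiZ_cases (- M); reflexivity || lia. Qed.

Lemma phiZ_realizable (z : Z) : -M <= z <= M -> realizable (phiZ z).
Proof.
  intros Hz.
  assert (Hg : forall i, (0 < i <= Z.to_nat M)%nat -> ~ is_min le (g i)).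
  { intros i Hi Hmin. destruct (g_chain 0 i Hi) as [Hle Hneq].
    apply Hneq, flow_antisym; [exact Hle | apply Hmin]. }
  phiZ_cases z; cbn; try exact I; apply Hg; lia.
Qed.

Lemma sv_realize_phiZ (val : nat -> Z) (f : formula) : (forall n, -M <= val n <= M) ->
  sv le (fun n => realize (phiZ (val n))) f = phiZ (evalZ M val f).
Proof.
  intros Hval. induction f as [n| |a IHa b IHb].
  - apply realize_spec, phiZ_realizable, Hval.
  - symmetry. apply phiZ_bot.
  - rewrite sv_Imp, IHa, IHb. apply phiZ_imp; apply evalZ_range; auto with zarith.
Qed.

End Embedding.

Lemma completeness (Gamma : list formula) (phi : formula) :
  models le Gamma phi -> NM_derives Gamma phi.
Proof.
  intros Hmodels. apply NNPP. intros Hphi.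
  set (B := Top :: flat_map subformulas (phi :: Gamma)).
  destruct (comparable_extension (flat_map imp_pairs B) Gamma phi Hphi) as [C [HC Hcomp]].
  set (Delta := Gamma ++ C) in *.
  set (M := lrank Delta B Top).
  assert (HM : 0 < M).
  { pose proof (lrank_range Delta B Bot) as Hr. rewrite lrank_bot in Hr.
    destruct (Z.eq_dec M 0) as [H0|]; [|lia].
    exfalso. apply HC, (dle_mp _ Bot); [|apply dle_bot].
    apply (derives_of_lrank_top _ B); [now left|]. rewrite lrank_bot. fold M. lia. }
  destruct (strict_chain (Z.to_nat M)) as [g Hg].
  set (val := fun n => lrank Delta B (Var n)).
  assert (Hval : forall n, -M <= val n <= M) by (intros; apply lrank_range).
  set (v := fun n => realize (phiZ g M (val n))).
  assert (Hsv : forall f, In f (phi :: Gamma) -> sv le v f = phiZ g M (lrank Delta B f)).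
  { intros f Hf. unfold v. rewrite sv_realize_phiZ by auto. f_equal. symmetry.
    apply lrank_evalZ; [exact Hcomp|]. intros x Hx. right. apply in_flat_map. eauto. }
  assert (Htop : sv le v phi = topT2).
  { apply Hmodels.
    - intros n. apply realize_spec, phiZ_realizable; auto.
    - intros psi Hpsi. rewrite Hsv by (right; exact Hpsi).
      rewrite lrank_derives; [apply phiZ_M | apply d_hyp, in_or_app; now left]. }
  rewrite Hsv in Htop by (now left). apply phiZ_top in Htop; [|apply lrank_range].
  apply HC, (derives_of_lrank_top _ B); [now left | exact Htop].
Qed.

End Flow.

Theorem mainTheorem7 (T : Type) (le : T -> T -> Prop) (Hflow : temporal_flow le)
  (Gamma : list formula) (phi : formula) :
  NM_derives Gamma phi <-> models le Gamma phi.
Proof. split; [apply soundness | apply completeness]; exact Hflow. Qed.
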